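(* If $\eta_n,\eta\in\mathcal{L}$ and $\eta_n\to\eta$ weakly, then $c_\pi(\eta_n)\to c_\pi(\eta)$.
   Context: $\pi\in(0,1)$, $\epsilon>0$, $B>0$. $\mathcal{L}=\{\eta\in\mathcal{P}(\mathbb{R}):\mathbb{E}_\eta|X|^{1+\epsilon}\le B\}$. $F_\eta(x)=\eta((-\infty,x])$, $x_\pi(\eta)=\min\{z:F_\eta(z)\ge\pi\}$, $c_\pi(\eta)=\frac{F_\eta(x_\pi(\eta))-\pi}{1-\pi}x_\pi(\eta)+\frac{1}{1-\pi}\int_{(x_\pi(\eta),\infty)}y\,dF_\eta(y)$. *)

From mathcomp Require Import all_boot all_order all_algebra.
From mathcomp Require Import all_classical all_reals all_analysis.
Import Order.TTheory GRing.Theory Num.Theory.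
Import numFieldNormedType.Exports.
Local Open Scope classical_set_scope.
Local Open Scope ring_scope.

Definition in_L {R : realType} (eps B : R) (eta : probability R R) : Prop :=
  (\int[eta]_x ((`|x| `^ (1 + eps))%:E) <= B%:E)%E.

Definition cdf {R : realType} (eta : probability R R) (x : R) : R :=
  fine (eta [set` `]-oo, x]]).

(* x_pi(eta) = min {z : F_eta(z) >= pi}; the minimum is attained by right-continuity
   of F_eta, so it equals the infimum. *)
Definition xpi {R : realType} (pi : R) (eta : probability R R) : R :=
  inf [set z : R | pi <= cdf eta z].

Definition cpi {R : realType} (pi : R) (eta : probability R R) : R :=
  (cdf eta (xpi pi eta) - pi) / (1 - pi) * xpi pi eta
  + (1 - pi)^-1 * Rintegral eta [set` `]xpi pi eta, +oo[] (fun y => y).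

Definition weak_cvg {R : realType} (eta_ : nat -> probability R R)
  (eta : probability R R) : Prop :=
  forall f : R -> R, continuous f -> (exists M : R, forall x, `|f x| <= M) ->
    ((fun n => \int[eta_ n]_x (f x)%:E) @ \oo --> \int[eta]_x (f x)%:E)%E.

(* Rockafellar-Uryasev: writing [stop_loss mu t] for E (X - t)^+, the value
   c_pi(mu) is the minimum over t of t + stop_loss mu t / (1 - pi), attained at
   the pi-quantile. Along a weakly convergent sequence in the class L these
   objectives converge pointwise: (X - t)^+ is a bounded continuous function of
   min(X, K) plus the tail (X - K)^+, whose mean is at most B / K^eps uniformly
   on L. They are also equi-Lipschitz, hence converge uniformly on compacts;
   since they are >= t and, uniformly, >= c_pi(mu) far to the left, their
   minima converge as well. *)

From Pilot Require Import Defs.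
From HB Require Import structures.
From mathcomp Require Import all_boot all_order all_algebra.
From mathcomp Require Import all_classical all_reals all_analysis.
From mathcomp Require Import measurable_realfun ring lra.
Import Order.TTheory GRing.Theory Num.Theory.
Import numFieldNormedType.Exports.
Local Open Scope classical_set_scope.
Local Open Scope ring_scope.

Section excess.
Context {R : realType}.
Implicit Types (s t x : R).

Definition excess t x : R := Num.max (x - t) 0.

Lemma excess_ge0 t x : 0 <= excess t x.
Proof. by rewrite le_max lexx orbT. Qed.

Lemma excess_ge t x : x - t <= excess t x.
Proof. by rewrite le_max lexx. Qed.

Lemma continuous_excess t : continuous (excess t).
Proof.
have -> : excess t = (fun x => x - t) \max cst 0 by [].
apply: max_fun_continuous; last exact: cst_continuous.
by move=> x; apply: cvgB; [exact: cvg_id | exact: cvg_cst].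
Qed.

Lemma measurable_excess t : measurable_fun [set: R] (excess t).
Proof. by apply: continuous_measurable_fun; exact: continuous_excess. Qed.

Lemma excess_le_norm t x : excess t x <= `|t| + `|x|.
Proof.
rewrite ge_max addr_ge0 // andbT addrC.
by apply: le_trans (ler_norm _) _; rewrite -[`|t|]normrN ler_normD.
Qed.

Lemma excess_lipschitz s t x : `|excess s x - excess t x| <= `|s - t|.
Proof.
have := ler_norm (s - t); have := ler_norm (t - s); rewrite distrC => h1 h2.
by rewrite /excess ler_norml /Order.max; do 2 case: ltP => ?; apply/andP; split; lra.
Qed.

Lemma excess_sub_bounds a b x : a <= b ->
  (b - a) * \1_[set` `]b, +oo[] x <= excess a x - excess b x
  <= (b - a) * \1_[set` `]a, +oo[] x.
Proof.
move=> ab; rewrite !indicE !mem_setE /= !in_itv /= !andbT /excess /Order.max.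
by do 4 case: ltP => ? /=; rewrite ?mulr0 ?mulr1; apply/andP; split; lra.
Qed.

Lemma excess_split t K x : t <= K -> excess t x = excess t (Num.min x K) + excess K x.
Proof.
move=> tK; rewrite /excess /Order.min; case: ltP => ?; rewrite /Order.max.
all: by repeat case: ltP => ? /=; lra.
Qed.

Lemma excess_min_le t K x : excess t (Num.min x K) <= excess t K.
Proof. by rewrite /excess /Order.min /Order.max; repeat case: ltP => ? /=; lra. Qed.

Lemma continuous_excess_min t K : continuous (fun x => excess t (Num.min x K)).
Proof.
have -> : (fun x => excess t (Num.min x K)) = excess t \o (id \min cst K) by [].
move=> x; apply: continuous_comp; last exact: continuous_excess.
by apply: min_fun_continuous; [move=> ?; exact: cvg_id | exact: cst_continuous].
Qed.

Lemma excess_le_powR (eps K x : R) : 0 <= eps -> 0 < K ->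
  excess K x <= `|x| `^ (1 + eps) / K `^ eps.
Proof.
move=> eps0 K0; have [xK|Kx] := leP x K.
  by rewrite /excess max_r ?subr_le0 // divr_ge0 ?powR_ge0.
have x0 : 0 < `|x| by rewrite normr_gt0 gt_eqF // (lt_trans K0).
rewrite ler_pdivlMr ?powR_gt0 // powRD ?(gt_eqF x0) ?implybT // powRr1 //.
apply: (@le_trans _ _ (`|x| * K `^ eps)).
  apply: ler_wpM2r; first exact: powR_ge0.
  by rewrite /excess ge_max normr_ge0 andbT; have := ler_norm x; lra.
apply: ler_wpM2l; first exact: ltW.
apply: ge0_ler_powR => //; first by rewrite nnegrE ltW.
by have := ler_norm x; lra.
Qed.

End excess.

Section probability_Rintegral.
Context {R : realType} (mu : probability R R).

Lemma integrable_bounded {f : R -> R} {M : R} :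
  measurable_fun [set: R] f -> (forall x, `|f x| <= M) ->
  mu.-integrable [set: R] (EFin \o f).
Proof.
move=> mf fM.
apply: (le_integrable measurableT _ _ (finite_measure_integrable_cst mu M measurableT)).
- exact/measurable_EFinP.
- by move=> x _; rewrite !abse_EFin lee_fin (le_trans (fM x)) // ler_norm.
Qed.

Lemma integrableB_EFin (f g : R -> R) : mu.-integrable [set: R] (EFin \o f) ->
  mu.-integrable [set: R] (EFin \o g) -> mu.-integrable [set: R] (EFin \o (f \- g)).
Proof.
by move=> intf intg; apply: eq_integrable (integrableB measurableT intf intg).
Qed.

Lemma Rintegral_cst1 c : \int[mu]_x c = c.
Proof. by rewrite /Rintegral integral_cst //= probability_setT mule1. Qed.

Lemma integrable_scale_indic c (D : set R) : measurable D ->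
  mu.-integrable [set: R] (EFin \o (fun x => c * \1_D x)).
Proof.
by move=> mD; apply: eq_integrable (integrableZl measurableT c (integrable_indic mu mD)).
Qed.

Lemma Rintegral_scale_indic c (D : set R) : measurable D ->
  \int[mu]_x (c * \1_D x) = c * fine (mu D).
Proof.
move=> mD; rewrite RintegralZl //; last exact: integrable_indic.
by rewrite /Rintegral integral_indic // setIT.
Qed.

Lemma Rintegral_norm_le (f : R -> R) c : mu.-integrable [set: R] (EFin \o f) ->
  (forall x, `|f x| <= c) -> `|\int[mu]_x f x| <= c.
Proof.
move=> intf fc; apply: le_trans (le_normr_Rintegral measurableT intf) _.
rewrite -[leRHS]Rintegral_cst1; apply: le_Rintegral => //.
- exact: integrable_abse intf.
- exact: finite_measure_integrable_cst.
Qed.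

End probability_Rintegral.

Definition stop_loss {R : realType} (mu : probability R R) (t : R) : R :=
  \int[mu]_x excess t x.

Section stop_loss.
Context {R : realType} {mu : probability R R}.
Hypothesis mu_abs : mu.-integrable [set: R] (fun x => `|x|%:E).

Lemma integrable_linear_growth (f : R -> R) (a b : R) :
  measurable_fun [set: R] f -> (forall x, `|f x| <= a + b * `|x|) ->
  mu.-integrable [set: R] (EFin \o f).
Proof.
move=> mf fab; have g0 x : 0 <= a + b * `|x| := le_trans (normr_ge0 _) (fab x).
apply: (@le_integrable _ _ _ mu _ measurableT _ (fun x => (a + b * `|x|)%:E)).
- exact/measurable_EFinP.
- by move=> x _; rewrite !abse_EFin lee_fin (ger0_norm (g0 x)).
- under eq_fun do rewrite EFinD EFinM.
  apply: integrableD => //; first exact: finite_measure_integrable_cst.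
  exact: integrableZl.
Qed.

Lemma integrable_id : mu.-integrable [set: R] EFin.
Proof.
apply: (@integrable_linear_growth id 0 1); first exact: measurable_id.
by move=> x; rewrite add0r mul1r.
Qed.

Lemma integrable_excess t : mu.-integrable [set: R] (EFin \o excess t).
Proof.
apply: (@integrable_linear_growth _ `|t| 1); first exact: measurable_excess.
by move=> x; rewrite mul1r ger0_norm ?excess_ge0 ?excess_le_norm.
Qed.

Lemma stop_loss_ge0 t : 0 <= stop_loss mu t.
Proof. by apply: Rintegral_ge0 => x _; exact: excess_ge0. Qed.

Lemma stop_loss_lipschitz s t : `|stop_loss mu s - stop_loss mu t| <= `|s - t|.
Proof.
rewrite /stop_loss -RintegralB //; try exact: integrable_excess.
apply: (Rintegral_norm_le mu); last exact: excess_lipschitz.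
by apply: (integrableB_EFin mu); exact: integrable_excess.
Qed.

Lemma mean_sub_le_stop_loss t : \int[mu]_x x - t <= stop_loss mu t.
Proof.
have intc := finite_measure_integrable_cst mu t measurableT.
rewrite -[X in _ - X](Rintegral_cst1 mu) -RintegralB //; last exact: integrable_id.
apply: le_Rintegral => //; last by move=> x _; exact: excess_ge.
- by apply: (integrableB_EFin mu) => //; exact: integrable_id.
- exact: integrable_excess.
Qed.

Lemma stop_loss_sub_bounds {a b : R} : a <= b ->
  (b - a) * fine (mu [set` `]b, +oo[]) <= stop_loss mu a - stop_loss mu b
  <= (b - a) * fine (mu [set` `]a, +oo[]).
Proof.
move=> ab; have mitv (c : R) : measurable [set` `]c, +oo[] by exact: measurable_itv.
rewrite -!(Rintegral_scale_indic mu) // /stop_loss -RintegralB //;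
  try exact: integrable_excess.
have intB : mu.-integrable [set: R] (EFin \o (fun x => excess a x - excess b x)).
  by apply: (integrableB_EFin mu); exact: integrable_excess.
apply/andP; split; apply: le_Rintegral => //; try exact: (integrable_scale_indic mu).
all: by move=> x _; case/andP: (excess_sub_bounds a b x ab).
Qed.

Lemma stop_loss_split {t K : R} : t <= K ->
  stop_loss mu t = \int[mu]_x excess t (Num.min x K) + stop_loss mu K.
Proof.
move=> tK; rewrite /stop_loss -RintegralD //; last 2 first.
- apply: (integrable_bounded mu (M := excess t K)).
    by apply: continuous_measurable_fun; exact: continuous_excess_min.
  by move=> x; rewrite ger0_norm ?excess_ge0 ?excess_min_le.
- exact: integrable_excess.
by apply: eq_Rintegral => x _; exact: excess_split.
Qed.

Lemma Rintegral_itv_oy_id q :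
  \int[mu]_(x in [set` `]q, +oo[]) x = stop_loss mu q + q * fine (mu [set` `]q, +oo[]).
Proof.
rewrite Rintegral_mkcond -(Rintegral_scale_indic mu); last exact: measurable_itv.
rewrite -RintegralD //; last 2 first.
- exact: integrable_excess.
- by apply: integrable_scale_indic; exact: measurable_itv.
apply: eq_Rintegral => x _; rewrite patchE indicE mem_setE /= in_itv /= andbT.
have -> : point = 0 :> R by [].
by rewrite /excess /Order.max; do 2 case: ltP => ? /=; lra.
Qed.

End stop_loss.

Section quantile.
Context {R : realType} (mu : probability R R).

(* The library states its facts on distribution functions for random variables;
   [mu] is the law of the identity. *)
Let idR : R -> R := idfun.
#[local] HB.instance Definition _ :=
  @isMeasurableFun.Build _ _ _ _ idR (@measurable_id _ _ setT).

Let cdfE x : (Defs.cdf mu x)%:E = cdf (idR : {RV mu >-> R}) x.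
Proof. by rewrite /Defs.cdf fineK // fin_num_measure. Qed.

Lemma cdf_le {x y : R} : x <= y -> Defs.cdf mu x <= Defs.cdf mu y.
Proof. by move=> xy; rewrite -lee_fin !cdfE cdf_nondecreasing. Qed.

Lemma cdf_right_continuous_fine : right_continuous (Defs.cdf mu).
Proof.
move=> x; apply: fine_cvg; rewrite /Defs.cdf fineK ?fin_num_measure //.
exact: (@cdf_right_continuous _ _ _ mu (idR : {RV mu >-> R}) x).
Qed.

Lemma cvg_cdfy1_fine : Defs.cdf mu @ +oo%R --> (1 : R).
Proof. exact: fine_cvg (cvg_cdfy1 (idR : {RV mu >-> R})). Qed.

Lemma cvg_cdfNy0_fine : Defs.cdf mu @ -oo%R --> (0 : R).
Proof. exact: fine_cvg (cvg_cdfNy0 (idR : {RV mu >-> R})). Qed.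

Lemma measure_itv_oy_cdf x : fine (mu [set` `]x, +oo[]) = 1 - Defs.cdf mu x.
Proof.
apply: EFin_inj; rewrite EFinB cdfE -(ccdf_1_cdf (idR : {RV mu >-> R})).
by rewrite fineK // fin_num_measure.
Qed.

Section quantile_level.
Context { pi : R }.
Hypotheses (pi0 : 0 < pi) (pi1 : pi < 1).
Let S := [set z | pi <= Defs.cdf mu z].

Lemma has_inf_quantile : has_inf S.
Proof.
split.
  have [M [_ HM]] := cvgr_ge _ cvg_cdfy1_fine _ pi1.
  by exists (M + 1); apply: HM; rewrite ltrDl.
have [M [_ HM]] := cvgr_lt _ cvg_cdfNy0_fine _ pi0.
exists M => z Sz; rewrite leNgt; apply/negP => /HM.
by rewrite ltNge Sz.
Qed.

Lemma cdf_quantile_ge : pi <= Defs.cdf mu (xpi pi mu).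
Proof.
apply: (cvgr_to_ge (cdf_right_continuous_fine _)); near=> z.
have qz : 0 < z - xpi pi mu by rewrite subr_gt0; near: z; exact: nbhs_right_gt.
have [w Sw] := inf_adherent qz has_inf_quantile; rewrite addrC subrK => wz.
exact: le_trans Sw (cdf_le (ltW wz)).
Unshelve. all: by end_near.
Qed.

Lemma cdf_lt_quantile {s : R} : s < xpi pi mu -> Defs.cdf mu s < pi.
Proof.
move=> sq; rewrite ltNge; apply/negP => Ss.
by have := ge_inf (has_inf_quantile.2) Ss; rewrite leNgt sq.
Qed.

End quantile_level.

End quantile.

Definition cvar_objective {R : realType} (pi : R) (mu : probability R R) (t : R) : R :=
  t + stop_loss mu t / (1 - pi).

Section cvar_objective.
Context {R : realType} { pi : R } {mu : probability R R}.
Hypotheses (pi0 : 0 < pi) (pi1 : pi < 1).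
Hypothesis mu_abs : mu.-integrable [set: R] (fun x => `|x|%:E).

Let subr1pi_gt0 : 0 < 1 - pi. Proof. by rewrite subr_gt0. Qed.

Lemma cpi_cvar_objective : cpi pi mu = cvar_objective pi mu (xpi pi mu).
Proof.
rewrite /cpi /cvar_objective Rintegral_itv_oy_id // measure_itv_oy_cdf.
by field; rewrite gt_eqF.
Qed.

Lemma le_cvar_objective t : t <= cvar_objective pi mu t.
Proof. by rewrite lerDl divr_ge0 ?stop_loss_ge0 ?ltW. Qed.

Lemma mean_le_cvar_objective t :
  (\int[mu]_x x - pi * t) / (1 - pi) <= cvar_objective pi mu t.
Proof.
have := mean_sub_le_stop_loss mu_abs t.
rewrite /cvar_objective ler_pdivrMr // mulrDl divfK ?gt_eqF //; lra.
Qed.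

Lemma cvar_objective_lipschitz s t :
  `|cvar_objective pi mu s - cvar_objective pi mu t| <= (1 + (1 - pi)^-1) * `|s - t|.
Proof.
have -> : cvar_objective pi mu s - cvar_objective pi mu t =
    (s - t) + (stop_loss mu s - stop_loss mu t) / (1 - pi).
  by rewrite /cvar_objective mulrBl; lra.
rewrite [leRHS]mulrDl mul1r; apply: le_trans (ler_normD _ _) _; rewrite lerD2l.
have inv_ge0 : 0 <= (1 - pi)^-1 by rewrite invr_ge0 ltW.
rewrite normrM (ger0_norm inv_ge0) mulrC.
by apply: ler_wpM2l => //; exact: (stop_loss_lipschitz mu_abs s t).
Qed.

Lemma cvar_objective_le u v : stop_loss mu u - stop_loss mu v <= (v - u) * (1 - pi) ->
  cvar_objective pi mu u <= cvar_objective pi mu v.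
Proof.
move=> h; rewrite /cvar_objective -subr_ge0.
have -> : v + stop_loss mu v / (1 - pi) - (u + stop_loss mu u / (1 - pi)) =
    ((v - u) * (1 - pi) - (stop_loss mu u - stop_loss mu v)) / (1 - pi).
  by field; rewrite gt_eqF.
by apply: divr_ge0; [rewrite subr_ge0 | exact: ltW].
Qed.

Lemma cvar_objective_min t : cvar_objective pi mu (xpi pi mu) <= cvar_objective pi mu t.
Proof.
set q := xpi pi mu; have [qt|tq] := leP q t.
  apply: cvar_objective_le.
  have /andP[_ hi] := stop_loss_sub_bounds mu_abs qt.
  rewrite measure_itv_oy_cdf in hi; apply: le_trans hi _.
  apply: ler_wpM2l; first by rewrite subr_ge0.
  by rewrite lerB // cdf_quantile_ge.
(* Left of the quantile cdf < pi, so the objective is nonincreasing on [t, q[;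
   Lipschitz continuity carries the bound to q. *)
apply/ler_addgt0Pr => e e0; pose L := 1 + (1 - pi)^-1.
have L0 : 0 < L by rewrite ltr_pwDl // invr_ge0 ltW.
pose s := Num.max t (q - e / L).
have ts : t <= s by rewrite le_max lexx.
have sq : s < q by rewrite gt_max tq gtrBl divr_gt0.
have qs : q - s <= e / L by rewrite lerBlDl -lerBlDr le_max lexx orbT.
have st : cvar_objective pi mu s <= cvar_objective pi mu t.
  apply: cvar_objective_le.
  have /andP[+ _] := stop_loss_sub_bounds mu_abs ts; rewrite measure_itv_oy_cdf.
  have st0 : 0 <= s - t by rewrite subr_ge0.
  have := ler_wpM2l st0 (lerB (lexx 1) (ltW (cdf_lt_quantile mu pi0 pi1 sq))).
  lra.
have Lqs : L * (q - s) <= e by rewrite mulrC -ler_pdivlMr.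
have qs0 : 0 <= q - s by rewrite subr_ge0 ltW.
have := cvar_objective_lipschitz q s; rewrite (ger0_norm qs0) -/L.
have := ler_norm (cvar_objective pi mu q - cvar_objective pi mu s); lra.
Qed.

End cvar_objective.

Section moment_class.
Context {R : realType} {eps B : R} {mu : probability R R}.
Hypotheses (eps0 : 0 <= eps) (muL : in_L eps B mu).

Let measurable_powR_abs : measurable_fun [set: R] (fun x => `|x| `^ (1 + eps)).
Proof.
apply: (measurableT_comp (measurable_powR _)).
by apply: continuous_measurable_fun; exact: norm_continuous.
Qed.

Lemma in_L_integrable_powR : mu.-integrable [set: R] (fun x => (`|x| `^ (1 + eps))%:E).
Proof.
apply/integrableP; split; first by apply/measurable_EFinP; exact: measurable_powR_abs.
under eq_integral do rewrite abse_EFin ger0_norm ?powR_ge0 //.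
exact: le_lt_trans muL (ltry _).
Qed.

Lemma in_L_Rintegral_powR : \int[mu]_x (`|x| `^ (1 + eps)) <= B.
Proof.
by rewrite -lee_fin fineK //; apply: integrable_fin_num in_L_integrable_powR.
Qed.

Lemma ler_norm_1DpowR (x : R) : `|x| <= 1 + `|x| `^ (1 + eps).
Proof.
have [x1|x1] := lerP 1 `|x|.
  have e1 : 1 <= 1 + eps by rewrite lerDl.
  by apply: le_trans (le1r_powR x1 e1) _; rewrite lerDr.
by apply: le_trans (ltW x1) _; rewrite lerDl powR_ge0.
Qed.

Let integrable_1DpowR :
  mu.-integrable [set: R] (EFin \o (fun x => 1 + `|x| `^ (1 + eps))).
Proof.
exact: eq_integrable (integrableD measurableT
  (finite_measure_integrable_cst mu 1 measurableT) in_L_integrable_powR).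
Qed.

Lemma in_L_integrable_abs : mu.-integrable [set: R] (fun x => `|x|%:E).
Proof.
apply: (le_integrable measurableT _ _ integrable_1DpowR).
  by apply/measurable_EFinP; apply: continuous_measurable_fun; exact: norm_continuous.
move=> x _; rewrite !abse_EFin lee_fin normr_id ger0_norm ?ler_norm_1DpowR //.
Qed.

Lemma in_L_mean_ge : -(1 + B) <= \int[mu]_x x.
Proof.
have intx := integrable_id in_L_integrable_abs.
rewrite lerNl; apply: ler_normlW; rewrite normrN.
apply: le_trans (le_normr_Rintegral measurableT intx) _.
apply: le_trans (_ : _ <= \int[mu]_x (1 + `|x| `^ (1 + eps))) _.
  apply: le_Rintegral => //; last by move=> x _; exact: ler_norm_1DpowR.
  exact: integrable_abse intx.
rewrite RintegralD //; last 2 first.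
- exact: finite_measure_integrable_cst.
- exact: in_L_integrable_powR.
by rewrite Rintegral_cst1 lerD2l in_L_Rintegral_powR.
Qed.

Lemma in_L_stop_loss_tail K : 0 < K -> stop_loss mu K <= B / K `^ eps.
Proof.
move=> K0; apply: le_trans (_ : _ <= \int[mu]_x (`|x| `^ (1 + eps) / K `^ eps)) _.
  apply: le_Rintegral => //; first exact: integrable_excess in_L_integrable_abs K.
    exact: eq_integrable (integrableZr measurableT _ in_L_integrable_powR).
  by move=> x _; exact: excess_le_powR.
rewrite RintegralZr //; last exact: in_L_integrable_powR.
by rewrite ler_pM2r ?invr_gt0 ?powR_gt0 // in_L_Rintegral_powR.
Qed.

End moment_class.

Lemma cvg_of_uniform_approx {R : realType} (u : nat -> R) (l : R) :
  (forall e, 0 < e -> exists v : nat -> R, exists w : R,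
     [/\ v n @[n --> \oo] --> w, `|l - w| <= e & forall n, `|u n - v n| <= e]) ->
  u n @[n --> \oo] --> l.
Proof.
move=> approx; apply/cvgrPdist_le => e e0.
have e3 : 0 < e / 3 by rewrite divr_gt0.
have [v [w [vw lw uv]]] := approx _ e3.
move/cvgrPdist_le/(_ _ e3): vw; apply: filterS => n wv.
have := ler_normD (l - w) (w - v n); have := ler_normD (l - v n) (v n - u n).
have := uv n; rewrite distrC !addrA !subrK; lra.
Qed.

Section weak_convergence.
Context {R : realType} {eta_ : nat -> probability R R} {eta : probability R R}.
Hypothesis eta_cvg : weak_cvg eta_ eta.

Lemma weak_cvg_Rintegral {f : R -> R} {M : R} : continuous f ->
  (forall x, `|f x| <= M) ->
  \int[eta_ n]_x f x @[n --> \oo] --> \int[eta]_x f x.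
Proof.
move=> fc fM; have mf : measurable_fun [set: R] f by exact: continuous_measurable_fun.
apply: fine_cvg; rewrite fineK; first by apply: eta_cvg => //; exists M.
exact (integrable_fin_num measurableT (integrable_bounded eta mf fM)).
Qed.

Lemma stop_loss_weak_cvg {eps B : R} t : 0 < eps -> 0 < B ->
  (forall n, in_L eps B (eta_ n)) -> in_L eps B eta ->
  stop_loss (eta_ n) t @[n --> \oo] --> stop_loss eta t.
Proof.
move=> eps0 B0 etaL_ etaL; apply: cvg_of_uniform_approx => e e0.
(* K is large enough for the uniform tail bound B / K^eps to be at most e. *)
pose K := Num.max t ((B / e) `^ eps^-1).
have Be : 0 < B / e by rewrite divr_gt0.
have tK : t <= K by rewrite le_max lexx.
have K0 : 0 < K by rewrite lt_max powR_gt0 ?orbT.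
have tail mu : in_L eps B mu -> 0 <= stop_loss mu K <= e.
  move=> muL; rewrite stop_loss_ge0 ?(in_L_integrable_abs (ltW eps0) muL) //=.
  apply: le_trans (in_L_stop_loss_tail (ltW eps0) muL _ K0) _.
  rewrite ler_pdivrMr ?powR_gt0 // mulrC -ler_pdivrMr //.
  have -> : B / e = ((B / e) `^ eps^-1) `^ eps.
    by rewrite -powRrM mulVf ?lt0r_neq0 // powRr1 // ltW.
  apply: ge0_ler_powR; rewrite ?nnegrE ?powR_ge0 ?(ltW K0) ?(ltW eps0) //.
  by rewrite le_max lexx orbT.
exists (fun n => \int[eta_ n]_x excess t (Num.min x K)).
exists (\int[eta]_x excess t (Num.min x K)); split.
- apply: (weak_cvg_Rintegral (M := excess t K) (continuous_excess_min t K)) => x.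
  by rewrite ger0_norm ?excess_ge0 ?excess_min_le.
- rewrite (stop_loss_split (in_L_integrable_abs (ltW eps0) etaL) tK) addrC addKr.
  by case/andP: (tail _ etaL) => ? ?; rewrite ger0_norm.
- move=> n; rewrite (stop_loss_split (in_L_integrable_abs (ltW eps0) (etaL_ n)) tK).
  by case/andP: (tail _ (etaL_ n)) => ? ?; rewrite addrC addKr ger0_norm.
Qed.

End weak_convergence.

Lemma equilipschitz_cvg_uniform {R : realType} {f_ : nat -> R -> R} {f : R -> R}
    {L : R} (a b : R) :
  (forall n s t, `|f_ n s - f_ n t| <= L * `|s - t|) ->
  (forall t, f_ n t @[n --> \oo] --> f t) ->
  forall e, 0 < e -> \forall n \near \oo, forall t, a <= t <= b -> `|f t - f_ n t| <= e.
Proof.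
move=> lip cvf e e0.
have L0 : 0 <= L.
  by have := lip 0%N 0 1; rewrite sub0r normrN normr1 mulr1; exact: le_trans.
have flip s t : `|f s - f t| <= L * `|s - t|.
  apply: (cvgr_to_le (cvg_norm (cvgB (cvf s) (cvf t)))).
  by apply: nearW => n; exact: lip.
pose h := e / (3 * (L + 1)).
have h0 : 0 < h by rewrite divr_gt0 // mulr_gt0 // ltr_pwDr.
have Lh : L * h <= e / 3.
  rewrite /h mulrA ler_pdivrMr ?mulr_gt0 ?ltr_pwDr //.
  have -> : e / 3 * (3 * (L + 1)) = L * e + e by field.
  by rewrite lerDl ltW.
pose N := (Num.Def.truncn ((b - a) / h)).+1.
pose grid (k : 'I_N) := a + k%:R * h.
have e3 : 0 < e / 3 by rewrite divr_gt0.
have : \forall n \near \oo, forall k : 'I_N, `|f (grid k) - f_ n (grid k)| <= e / 3.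
  by apply: filter_forall => k; exact: cvgr_dist_le _ _ (cvf _) _ e3.
apply: filterS => n near_grid t /andP[le_at le_tb].
have ta : 0 <= (t - a) / h by apply: divr_ge0; [rewrite subr_ge0 | exact: ltW].
have /andP[k1 k2] := truncn_itv ta.
have kN : (Num.Def.truncn ((t - a) / h) < N)%N.
  have tb : (t - a) / h <= (b - a) / h by rewrite ler_pM2r ?invr_gt0 // lerD2r.
  have /andP[_ bN] := truncn_itv (le_trans ta tb).
  by rewrite -(ltr_nat R); apply: le_lt_trans k1 (le_lt_trans tb bN).
pose s := grid (Ordinal kN).
have ts : `|t - s| <= h.
  move: k1 k2; rewrite ler_pdivlMr // ltr_pdivrMr // -natr1 [(_ + 1) * h]mulrDl mul1r.
  by rewrite /s /grid /= => k1 k2; rewrite ler_norml; apply/andP; split; lra.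
have := near_grid (Ordinal kN); rewrite -/s => fs.
have := flip t s; have := lip n s t; rewrite (distrC s) => fns ft.
have := ler_wpM2l L0 ts.
have := ler_normD (f t - f s) (f s - f_ n t).
have := ler_normD (f s - f_ n s) (f_ n s - f_ n t).
rewrite !addrA !subrK; lra.
Qed.

Section cpi_weak_cvg.
Context {R : realType} (pi : R) {eps B : R} {eta_ : nat -> probability R R}
  {eta : probability R R}.
Hypotheses (pi0 : 0 < pi) (pi1 : pi < 1) (eps0 : 0 < eps) (B0 : 0 < B).
Hypotheses (etaL_ : forall n, in_L eps B (eta_ n)) (etaL : in_L eps B eta).
Hypothesis eta_cvg : weak_cvg eta_ eta.

Let abs_ n := in_L_integrable_abs (ltW eps0) (etaL_ n).
Let abs := in_L_integrable_abs (ltW eps0) etaL.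

Lemma cvar_objective_weak_cvg t :
  cvar_objective pi (eta_ n) t @[n --> \oo] --> cvar_objective pi eta t.
Proof.
apply: cvgD; first exact: cvg_cst.
exact: cvgM (stop_loss_weak_cvg eta_cvg t eps0 B0 etaL_ etaL) (cvg_cst _).
Qed.

Lemma cpi_weak_cvg_lower e : 0 < e ->
  \forall n \near \oo, cpi pi eta - e <= cpi pi (eta_ n).
Proof.
move=> e0; set c := cpi pi eta.
(* Left of -M, the mean bound of [mean_le_cvar_objective] already exceeds c. *)
pose M := ((1 - pi) * `|c| + 1 + B) / pi.
have := equilipschitz_cvg_uniform (- M) c
  (fun n => cvar_objective_lipschitz pi1 (abs_ n)) cvar_objective_weak_cvg _ e0.
apply: filterS => n unif; rewrite (cpi_cvar_objective pi1 (abs_ n)).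
set t := xpi pi (eta_ n).
have [ct|tc] := leP c t.
  apply: le_trans (le_cvar_objective pi1 t); rewrite lerBlDr.
  by apply: le_trans ct _; rewrite lerDl ltW.
have [tM|Mt] := leP t (- M).
  apply: le_trans (mean_le_cvar_objective pi1 (abs_ n) t).
  rewrite ler_pdivlMr ?subr_gt0 //.
  have piM : pi * M = (1 - pi) * `|c| + 1 + B by rewrite /M mulrC divfK ?gt_eqF.
  have := ler_wpM2l (ltW pi0) (tM : t <= - M).
  have pi1' : 0 <= 1 - pi by rewrite subr_ge0 ltW.
  have := ler_wpM2l pi1' (ler_norm c); have := mulr_ge0 (ltW e0) pi1'.
  have := in_L_mean_ge (ltW eps0) (etaL_ n); lra.
have := unif t; rewrite (ltW Mt) (ltW tc) => /(_ isT).
have := cvar_objective_min pi0 pi1 abs t; rewrite -(cpi_cvar_objective pi1 abs) -/c.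
by rewrite ler_distlC => ? /andP[? ?]; lra.
Qed.

End cpi_weak_cvg.

Theorem lemma6 (R : realType) (pi eps B : R) (eta_ : nat -> probability R R)
  (eta : probability R R) :
  0 < pi < 1 -> 0 < eps -> 0 < B ->
  (forall n, in_L eps B (eta_ n)) -> in_L eps B eta ->
  weak_cvg eta_ eta ->
  (fun n => cpi pi (eta_ n)) @ \oo --> cpi pi eta.
Proof.
move=> /andP[pi0 pi1] eps0 B0 etaL_ etaL eta_cvg.
have abs := in_L_integrable_abs (ltW eps0) etaL.
have abs_ n := in_L_integrable_abs (ltW eps0) (etaL_ n).
apply/cvgrPdist_le => e e0.
have := cvar_objective_weak_cvg pi eps0 B0 etaL_ etaL eta_cvg (xpi pi eta).
move/cvgrPdist_le/(_ _ e0) => upper.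
have lower := cpi_weak_cvg_lower pi pi0 pi1 eps0 B0 etaL_ etaL eta_cvg _ e0.
apply: filterS2 upper lower => n up lo.
have := cvar_objective_min pi0 pi1 (abs_ n) (xpi pi eta).
rewrite -(cpi_cvar_objective pi1 (abs_ n)) -(cpi_cvar_objective pi1 abs) in up *.
move=> le_cpi.
move: up; rewrite !ler_distl => /andP[up _]; apply/andP; split; lra.
Qed.
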